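(* Let $N\ge 2$, $r(k)=N-1-k$ on $\{0,\dots,N-1\}$, and call a map $\mu$ on partial $N\times N$ arrays admissible if it has the following form: there is a permutation $\pi$ of $\{0,\dots,N-1\}$ with $\pi\circ r=r\circ\pi$ and $\pi(0)\in\{0,N-1\}$ and a $\rho\in\{\pi, r\circ\pi\}$ such that, for a partial array $A$ whose first row is a full permutation of $\{0,\dots,N-1\}$, $T(A)[\pi(i)][\rho(j)]=A[i][j]$ (cell $(\pi(i),\rho(j))$ filled iff $(i,j)$ filled) and $\mu(A)=\tau\circ T(A)$, where $\tau$ is the unique symbol permutation making the first row of $\tau\circ T(A)$ equal to $0,1,\dots,N-1$. Let $\sim$ be the equivalence relation on the set $\mathcal H_N$ of hourglass designs of order $N$ generated by $H\sim\mu(H)$ for admissible $\mu$. For $H\in\mathcal H_N$ let $n(H)$ be the number of normalized diagonal Latin squares of order $N$ agreeing with $H$ on all filled cells of $H$. Then for each $\sim$-class $C$, $n$ is constant on $C$, and the number of normalized diagonal Latin squares of order $N$ equals $\sum_{C} |C|\cdot n(H_C)$, where the sum runs over all $\sim$-classes $C$ of $\mathcal H_N$ and $H_C\in C$ is an arbitrary representative.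
   Context: A diagonal Latin square of order $N$ is an $N\times N$ array with entries in $\{0,\dots,N-1\}$ such that every row, every column, the main diagonal (cells $(i,i)$) and the main antidiagonal (cells $(i,N-1-i)$) each contain every element of $\{0,\dots,N-1\}$ exactly once; rows and columns are indexed $0,\dots,N-1$. It is normalized if its first row (row $0$) is $0,1,\dots,N-1$. A hourglass design of order $N$ is a partial $N\times N$ array in which exactly the cells of row $0$, row $N-1$, the main diagonal and the main antidiagonal are filled with symbols from $\{0,\dots,N-1\}$, the first row is $0,1,\dots,N-1$, and no symbol occurs twice among the filled cells of any row, any column, the main diagonal, or the main antidiagonal. *)

From mathcomp Require Import all_boot all_order all_algebra all_fingroup.
Set Implicit Arguments. Unset Strict Implicit. Unset Printing Implicit Defensive.

(* Indices and symbols are 'I_N = {0,...,N-1}; r(k) = N-1-k is rev_ord. *)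

(* Partial arrays: None = empty cell. *)
Definition parray (N : nat) := 'M[option 'I_N]_N.
Definition farray (N : nat) := 'M['I_N]_N.

Definition diag_latin N (L : farray N) : bool :=
  [&& [forall i, forall s, #|[pred j | L i j == s]| == 1],
      [forall j, forall s, #|[pred i | L i j == s]| == 1],
      [forall s, #|[pred i | L i i == s]| == 1] &
      [forall s, #|[pred i | L i (rev_ord i) == s]| == 1]].

Definition normalized N (L : farray N) : bool :=
  [forall i, forall j, (val i == 0) ==> (L i j == j)].

Definition ndls N (L : farray N) : bool := diag_latin L && normalized L.

Definition hg_cell N (i j : 'I_N) : bool :=
  [|| val i == 0, val i == N.-1, i == j | j == rev_ord i].

Definition hourglass N (H : parray N) : bool :=
  [&& [forall i, forall j, (H i j != None) == hg_cell i j],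
      [forall i, forall j, (val i == 0) ==> (H i j == Some j)],
      [forall i, forall j, forall j', ((j != j') && (H i j != None)) ==> (H i j != H i j')],
      [forall j, forall i, forall i', ((i != i') && (H i j != None)) ==> (H i j != H i' j)],
      [forall i, forall i', ((i != i') && (H i i != None)) ==> (H i i != H i' i')] &
      [forall i, forall i', ((i != i') && (H i (rev_ord i) != None)) ==>
                             (H i (rev_ord i) != H i' (rev_ord i'))]].

Definition adm_perm N (pi : {perm 'I_N}) : bool :=
  [forall k, pi (rev_ord k) == rev_ord (pi k)] &&
  [forall i, (val i == 0) ==> ((val (pi i) == 0) || (val (pi i) == N.-1))].

Definition rho_of N (pi : {perm 'I_N}) (b : bool) (j : 'I_N) : 'I_N :=
  if b then rev_ord (pi j) else pi j.

(* H' = mu(H) for an admissible mu: H'[pi i][rho j] = tau(H[i][j]) (with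
   empty cells preserved), where tau is a symbol permutation making the
   first row of H' equal to 0,...,N-1 (such tau is unique). *)
Definition adm_step N (H H' : parray N) : bool :=
  [exists pi : {perm 'I_N}, exists b : bool, exists tau : {perm 'I_N},
    [&& adm_perm pi,
        [forall i, forall j, H' (pi i) (rho_of pi b j) == omap tau (H i j)] &
        [forall i, forall k, (val i == 0) ==> (H' i k == Some k)]]].

Definition hg_edge N (H H' : parray N) : bool :=
  [&& hourglass H, hourglass H' & adm_step H H' || adm_step H' H].

Definition hg_sim N (H H' : parray N) : bool := connect (@hg_edge N) H H'.

Definition hg_set N : {set parray N} := [set H | hourglass H].

Definition hg_classes N : {set {set parray N}} :=
  [set [set H' in hg_set N | hg_sim H H'] | H in hg_set N].

Definition agrees N (H : parray N) (L : farray N) : bool :=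
  [forall i, forall j, forall s, (H i j == Some s) ==> (L i j == s)].

Definition n_compl N (H : parray N) : nat :=
  #|[set L : farray N | ndls L && agrees H L]|.

From mathcomp Require Import all_boot all_order all_algebra all_fingroup.
Set Implicit Arguments. Unset Strict Implicit. Unset Printing Implicit Defensive.

(* An admissible map acts on full arrays by the same row, column and symbol
   permutations as on hourglass designs.  Because pi commutes with r, it sends
   rows, columns and the two diagonals onto rows, columns and the two
   diagonals, so it maps the diagonal Latin completions of H injectively into
   those of mu(H); as the inverse of an admissible map is admissible, n is
   constant on ~-classes.  A normalized diagonal Latin square L agrees with
   exactly one hourglass design, its restriction to the hourglass cells, so
   summing n over H_N counts every square once; grouping that sum by classes
   gives the formula. *)

Lemma fibers_card1P (T : finType) (f : T -> T) :
  reflect (injective f) [forall s, #|[pred x | f x == s]| == 1].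
Proof.
apply: (iffP forallP) => [fib1 x y fxy | injf s].
  have /eqP fib := fib1 (f x).
  have /card_le1_eqP : #|[pred z | f z == f x]| <= 1 by rewrite fib.
  by apply; rewrite inE ?fxy.
rewrite -(cards1 s) -(card_preimset _ injf); apply/eqP/eq_card => x.
by rewrite !inE.
Qed.

Lemma diag_latinP N (L : farray N) :
  reflect [/\ forall i, injective (fun j => L i j),
              forall j, injective (fun i => L i j),
              injective (fun i => L i i) &
              injective (fun i => L i (rev_ord i))]
          (diag_latin L).
Proof.
apply: (iffP and4P) => [[/forallP R /forallP C /fibers_card1P D /fibers_card1P A]
                       | [R C D A]].
  by split=> // k; apply/fibers_card1P.
by split; [apply/forallP=> i | apply/forallP=> j | |]; apply/fibers_card1P.
Qed.

Definition transform (T U : Type) N (pi : {perm 'I_N}) (b : bool) (g : T -> U)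
    (A : 'M[T]_N) : 'M[U]_N :=
  \matrix_(i, j) g (A ((pi^-1)%g i) (rho_of (pi^-1)%g b j)).

Section Transform.
Variables (N : nat) (pi : {perm 'I_N}) (b : bool).
Hypothesis pi_rev : forall k, pi (rev_ord k) = rev_ord (pi k).

Lemma permV_rev k : (pi^-1)%g (rev_ord k) = rev_ord ((pi^-1)%g k).
Proof. by apply: (canLR (permK pi)); rewrite pi_rev permKV. Qed.

Lemma rho_ofK : cancel (rho_of pi b) (rho_of (pi^-1)%g b).
Proof. by move=> j; rewrite /rho_of; case: b; rewrite ?permV_rev ?rev_ordK permK. Qed.

Lemma rho_ofVK : cancel (rho_of (pi^-1)%g b) (rho_of pi b).
Proof. by move=> j; rewrite /rho_of; case: b; rewrite ?pi_rev ?rev_ordK permKV. Qed.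

Lemma transformE (T U : Type) (g : T -> U) (A : 'M[T]_N) i j :
  transform pi b g A (pi i) (rho_of pi b j) = g (A i j).
Proof. by rewrite mxE permK rho_ofK. Qed.

Lemma transformP (T U : Type) (g : T -> U) (A : 'M[T]_N) (A' : 'M[U]_N) :
  A' = transform pi b g A <-> forall i j, A' (pi i) (rho_of pi b j) = g (A i j).
Proof.
split=> [-> i j | A'E]; first exact: transformE.
by apply/matrixP => i j; rewrite mxE -A'E permKV rho_ofVK.
Qed.

Lemma transformK (T U : Type) (g : T -> U) (g' : U -> T) :
  cancel g g' -> cancel (transform pi b g) (transform (pi^-1)%g b g').
Proof. by move=> gK A; apply/matrixP => i j; rewrite mxE invgK transformE gK. Qed.

Lemma diag_latin_transform (tau : 'I_N -> 'I_N) (L : farray N) :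
  injective tau -> diag_latin L -> diag_latin (transform pi b tau L).
Proof.
move=> tau_inj /diag_latinP [row_inj col_inj diag_inj anti_inj].
have piV_inj := @perm_inj _ (pi^-1)%g.
have rhoV_inj := can_inj rho_ofVK.
apply/diag_latinP; split=> [i | j | |].
- apply: eq_inj (inj_comp tau_inj (inj_comp (row_inj _) rhoV_inj)) _.
  by move=> j; rewrite mxE.
- apply: eq_inj (inj_comp tau_inj (inj_comp (col_inj _) piV_inj)) _.
  by move=> i; rewrite mxE.
- case: b; [apply: eq_inj (inj_comp tau_inj (inj_comp anti_inj piV_inj)) _
           | apply: eq_inj (inj_comp tau_inj (inj_comp diag_inj piV_inj)) _];
  by move=> i; rewrite mxE.
- case: b; [apply: eq_inj (inj_comp tau_inj (inj_comp diag_inj piV_inj)) _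
           | apply: eq_inj (inj_comp tau_inj (inj_comp anti_inj piV_inj)) _];
  by move=> i; rewrite mxE /rho_of permV_rev ?rev_ordK.
Qed.

End Transform.

Lemma hourglass_row0 N (H : parray N) i j : hourglass H -> val i = 0 -> H i j = Some j.
Proof.
by case/and3P=> _ /forallP/(_ i)/forallP/(_ j)/implyP row0 _ /eqP/row0/eqP.
Qed.

Lemma agreesP N (H : parray N) (L : farray N) :
  reflect (forall i j s, H i j = Some s -> L i j = s) (agrees H L).
Proof.
apply: (iffP forallP) => [ag i j s /eqP Hij | ag i].
  by apply/eqP; move: (ag i) => /forallP/(_ j)/forallP/(_ s)/implyP; apply.
by apply/forallP => j; apply/forallP => s; apply/implyP => /eqP/ag->.
Qed.

Lemma agrees_normalized N (H : parray N) (L : farray N) :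
  hourglass H -> agrees H L -> normalized L.
Proof.
move=> hH /agreesP ag; apply/forallP => i; apply/forallP => j; apply/implyP.
by move=> /eqP i0; apply/eqP/ag/hourglass_row0.
Qed.

Lemma agrees_transform N (pi : {perm 'I_N}) b (tau : 'I_N -> 'I_N) H L :
  agrees H L -> agrees (transform pi b (omap tau) H) (transform pi b tau L).
Proof.
move/agreesP=> ag; apply/agreesP => i j s; rewrite !mxE.
by case Hij: (H _ _) => [s'|] //= [<-]; rewrite (ag _ _ _ Hij).
Qed.

Lemma adm_perm_rev N (pi : {perm 'I_N}) :
  adm_perm pi -> forall k, pi (rev_ord k) = rev_ord (pi k).
Proof. by case/andP=> /forallP pi_rev _ k; apply/eqP. Qed.

Lemma adm_permV N (pi : {perm 'I_N}) : adm_perm pi -> adm_perm (pi^-1)%g.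
Proof.
move=> adm; have pi_rev := adm_perm_rev adm.
case/andP: adm => _ /forallP pi0; apply/andP; split.
  by apply/forallP => k; rewrite (permV_rev pi_rev).
apply/forallP => i; apply/implyP => i0.
have rev0 : val (rev_ord i) = N.-1 by rewrite /= (eqP i0) subn1.
case/orP: (implyP (pi0 i) i0) => /eqP pi_i.
  have pi_fix : pi i = i by apply: val_inj; rewrite pi_i (eqP i0).
  by rewrite -{1}pi_fix permK i0.
have pi_swap : pi i = rev_ord i by apply: val_inj; rewrite pi_i rev0.
have -> : (pi^-1)%g i = rev_ord i.
  by apply: (canLR (permK pi)); rewrite pi_rev pi_swap rev_ordK.
by rewrite rev0 eqxx orbT.
Qed.

Lemma adm_stepP N (H H' : parray N) :
  reflect (exists pi b (tau : {perm 'I_N}),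
             [/\ adm_perm pi, H' = transform pi b (omap tau) H &
                 forall i k, val i = 0 -> H' i k = Some k])
          (adm_step H H').
Proof.
apply: (iffP existsP) => [[pi /existsP [b /existsP [tau]]]
                        | [pi [b [tau [adm H'E row0]]]]].
  case/and3P=> adm /forallP H'E /forallP row0; exists pi, b, tau; split=> //.
    apply/(transformP _ (adm_perm_rev adm)) => i j.
    by apply/eqP; move/forallP: (H'E i).
  by move=> i k /eqP i0; move/forallP: (row0 i) => /(_ k)/implyP/(_ i0)/eqP.
exists pi; apply/existsP; exists b; apply/existsP; exists tau.
move/(transformP _ (adm_perm_rev adm)): H'E => H'E.
apply/and3P; split=> //.
  by apply/forallP => i; apply/forallP => j; rewrite H'E.
by apply/forallP => i; apply/forallP => k; apply/implyP => /eqP/row0->.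
Qed.

Lemma adm_step_sym N (H H' : parray N) :
  hourglass H -> adm_step H H' -> adm_step H' H.
Proof.
move=> hH /adm_stepP [pi [b [tau [adm -> _]]]].
apply/adm_stepP; exists (pi^-1)%g, b, (tau^-1)%g; split.
- exact: adm_permV.
- by rewrite (transformK _ (adm_perm_rev adm) (omapK (permK tau))).
- by move=> i k; apply: hourglass_row0.
Qed.

Lemma n_compl_adm_step N (H H' : parray N) :
  hourglass H' -> adm_step H H' -> n_compl H <= n_compl H'.
Proof.
move=> hH' /adm_stepP [pi [b [tau [adm H'E _]]]].
have pi_rev := adm_perm_rev adm.
have transform_inj : injective (transform pi b tau).
  exact: can_inj (transformK _ pi_rev (permK tau)).
rewrite /n_compl -(card_imset _ transform_inj); apply/subset_leq_card/subsetP => L'.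
case/imsetP=> L; rewrite inE => /andP [/andP [dlL _] agL] ->.
have ag' : agrees H' (transform pi b tau L) by rewrite H'E agrees_transform.
rewrite inE /ndls ag' (agrees_normalized hH' ag') !andbT.
exact: diag_latin_transform (@perm_inj _ tau) dlL.
Qed.

Lemma n_compl_edge N (H H' : parray N) : hg_edge H H' -> n_compl H = n_compl H'.
Proof.
case/and3P=> hH hH' step; apply/eqP; rewrite eqn_leq.
by case/orP: step => step; rewrite !n_compl_adm_step // adm_step_sym.
Qed.

Lemma n_compl_sim N (H H' : parray N) : hg_sim H H' -> n_compl H = n_compl H'.
Proof.
case/connectP=> p; elim: p H => [|H1 p IHp] H /=; first by move=> _ ->.
by case/andP=> /n_compl_edge-> /IHp.
Qed.

Definition hourglass_of N (L : farray N) : parray N :=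
  (\matrix_(i, j) if hg_cell i j then Some (L i j) else None)%R.

Lemma hourglass_of_ndls N (L : farray N) : ndls L -> hourglass (hourglass_of L).
Proof.
case/andP=> /diag_latinP [row_inj col_inj diag_inj anti_inj] /forallP normL.
have filled_neq (c : bool) (s s' : 'I_N) :
    s != s' -> Some s != (if c then Some s' else None).
  by case: c => //; apply: contra => /eqP [->].
apply/andP; split; [|apply/and5P; split]; apply/forallP => i.
- by apply/forallP => j; rewrite mxE; case: hg_cell.
- apply/forallP => j; apply/implyP => i0; rewrite mxE /hg_cell i0 /=.
  by move/forallP: (normL i) => /(_ j)/implyP/(_ i0).
- apply/forallP => j; apply/forallP => j'; apply/implyP => /andP [ne]; rewrite !mxE.
  case: (hg_cell i j); rewrite ?eqxx // => _.
  by apply: (filled_neq); rewrite (inj_eq (row_inj i)).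
- apply/forallP => i1; apply/forallP => i2; apply/implyP => /andP [ne]; rewrite !mxE.
  case: (hg_cell i1 i); rewrite ?eqxx // => _.
  by apply: (filled_neq); rewrite (inj_eq (col_inj i)).
- apply/forallP => i'; apply/implyP => /andP [ne _]; rewrite !mxE /hg_cell !eqxx !orbT.
  by apply: contra ne => /eqP [/diag_inj ->].
- apply/forallP => i'; apply/implyP => /andP [ne _]; rewrite !mxE /hg_cell !eqxx !orbT.
  by apply: contra ne => /eqP [/anti_inj ->].
Qed.

Lemma hourglass_agreesE N (H : parray N) (L : farray N) :
  hourglass H -> agrees H L = (H == hourglass_of L).
Proof.
case/andP=> /forallP filled _; apply/agreesP/eqP => [ag | ->]; last first.
  by move=> i j s; rewrite mxE; case: hg_cell => // -[].
apply/matrixP => i j; rewrite mxE.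
move/forallP: (filled i) => /(_ j)/eqP <-.
by case Hij: (H i j) => [s|] //=; rewrite (ag _ _ _ Hij).
Qed.

Lemma card_ndls_sum_n_compl N :
  #|[set L : farray N | ndls L]| = \sum_(H in hg_set N) n_compl H.
Proof.
rewrite -sum1_card (partition_big (@hourglass_of N) (fun H => H \in hg_set N)) => [|L].
  apply: eq_bigr => H; rewrite inE => hH; rewrite sum1dep_card.
  by apply: eq_card => L; rewrite !inE (hourglass_agreesE _ hH) eq_sym.
by rewrite !inE => /hourglass_of_ndls.
Qed.

Lemma hg_classes_partition N : partition (hg_classes N) (hg_set N).
Proof.
have sim_sym : connect_sym (@hg_edge N).
  by apply: sym_connect_sym => H H'; rewrite /hg_edge andbCA orbC.
apply: equivalence_partitionP => H1 H2 H3 _ _ _; split; first exact: connect0.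
by move=> sim12; apply/idP/idP; apply: connect_trans; rewrite // sim_sym.
Qed.

Theorem corollary1 (N : nat) (hN : 2 <= N) :
  (forall H H' : parray N, hourglass H -> hourglass H' -> hg_sim H H' ->
     n_compl H = n_compl H') /\
  (forall rep : {set parray N} -> parray N,
     (forall C, C \in hg_classes N -> rep C \in C) ->
     #|[set L : farray N | ndls L]| =
       \sum_(C in hg_classes N) #|C| * n_compl (rep C)).
Proof.
split=> [H H' _ _ | rep rep_in]; first exact: n_compl_sim.
have /and3P [/eqP cover_hg triv_hg _] := hg_classes_partition N.
rewrite card_ndls_sum_n_compl -cover_hg (big_trivIset _ triv_hg).
apply: eq_bigr => C C_class; rewrite -sum_nat_const; apply: eq_bigr => H H_C.
have rep_C := rep_in C C_class; case/imsetP: C_class => H0 _ C_def.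
rewrite C_def !inE in H_C rep_C; case/andP: H_C => _ sim_H; case/andP: rep_C => _ sim_rep.
by rewrite C_def -(n_compl_sim sim_H) (n_compl_sim sim_rep).
Qed.
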